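(* For every integer $n\geq 38$ there exists a neutral graph on $n$ vertices that is not a tree.
   Context: All graphs are finite, simple and connected. For a graph $G=(V,E)$ with $m=|E|\geq 1$ edges, let $d_u$ denote the degree of vertex $u$ and write sums over edges $e_{uv}\in E$ (each edge counted once). The assortativity coefficient of $G$ is $$r(G)=\frac{m^{-1}\sum_{e_{uv}\in E} d_{u}d_{v}-\Big[m^{-1}\sum_{e_{uv}\in E} \tfrac{1}{2}(d_{u}+d_{v})\Big]^{2}}{m^{-1}\sum_{e_{uv}\in E} \tfrac{1}{2}(d^{2}_{u}+d^{2}_{v})-\Big[m^{-1}\sum_{e_{uv}\in E} \tfrac{1}{2}(d_{u}+d_{v})\Big]^{2}},$$ defined whenever the denominator is nonzero. $G$ is called neutral if $r(G)$ is defined and $r(G)=0$. *)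

From mathcomp Require Import all_boot all_order all_algebra.
Set Implicit Arguments. Unset Strict Implicit. Unset Printing Implicit Defensive.
Import Order.TTheory GRing.Theory Num.Theory.
Local Open Scope ring_scope.

Section Graphs.
Variable n : nat.
Implicit Type e : rel 'I_n.

Definition simple_graph e : Prop := symmetric e /\ irreflexive e.

Definition connected_graph e : Prop := forall u v : 'I_n, connect e u v.

Definition has_cycle e : Prop :=
  exists c : seq 'I_n, [/\ (3 <= size c)%N, uniq c & cycle e c].

Definition is_tree e : Prop := connected_graph e /\ ~ has_cycle e.

Definition deg e (u : 'I_n) : nat := #|[set v | e u v]|.

Definition edge_sum e (F : 'I_n -> 'I_n -> rat) : rat :=
  \sum_(u : 'I_n) \sum_(v : 'I_n | ((u < v)%N && e u v)) F u v.

Definition nedges e : rat := edge_sum e (fun _ _ => 1).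

Definition mean_term e : rat :=
  (nedges e)^-1 * edge_sum e (fun u v => (2%:R)^-1 * ((deg e u)%:R + (deg e v)%:R)).

Definition assort_num e : rat :=
  (nedges e)^-1 * edge_sum e (fun u v => (deg e u)%:R * (deg e v)%:R)
  - (mean_term e) ^+ 2.

Definition assort_den e : rat :=
  (nedges e)^-1 * edge_sum e
     (fun u v => (2%:R)^-1 * ((deg e u)%:R ^+ 2 + (deg e v)%:R ^+ 2))
  - (mean_term e) ^+ 2.

(* assortativity coefficient r(G) (meaningful when assort_den e != 0) *)
Definition assortativity e : rat := assort_num e / assort_den e.

Definition neutral e : Prop :=
  nedges e != 0 /\ assort_den e != 0 /\ assortativity e = 0.

End Graphs.

From mathcomp Require Import all_boot all_order all_algebra.
From mathcomp Require Import zify ring lra.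

Set Implicit Arguments. Unset Strict Implicit. Unset Printing Implicit Defensive.
Import Order.TTheory GRing.Theory Num.Theory.

(* The assortativity coefficient is the correlation coefficient of the degrees at the two ends
   of an edge.  So if c is the mean endpoint degree over the edges and x u := deg u - c, then
   r(G) = 0 as soon as the sum of x u * x v over the edges vanishes (and x is not identically 0
   on the endpoints).

   The witness is the square of the path 6, 7, ..., n-1 (i ~ j iff 1 <= |i - j| <= 2) with a
   head on 0..5: a triangle 0 1 2 joined to both 4 and 5, and a pendant vertex 3 at 0.  Its
   degrees are 5, 4, 4, 1, 4, 5 on the head, 4 along the path and 3, 2 at its last two vertices.
   For c = 4 the nonzero deviations are +1 at 0 and 5, -3 at 3, and -1, -2 at the end; the mean
   is 4 because the sum of deg v * x v is 5 - 3 + 5 - 3 - 4 = 0, and the only edges joining two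
   deviating vertices, 03, 05 and the last edge, contribute -3 + 1 + 2 = 0.  The triangle makes
   the graph not a tree.  All this holds as soon as n >= 10. *)

Lemma big_nat_range (R : Type) (idx : R) (op : R -> R -> R) m n a b
    (P Q : pred nat) (F : nat -> R) :
  (forall v, (m <= v < n) && P v = (a <= v < b) && Q v) ->
  \big[op/idx]_(m <= v < n | P v) F v = \big[op/idx]_(a <= v < b | Q v) F v.
Proof.
move=> PQ; rewrite -big_filter -[RHS]big_filter; congr bigop.
apply: (irr_sorted_eq ltn_trans ltnn).
- by apply: sorted_filter; [exact: ltn_trans | exact: iota_ltn_sorted].
- by apply: sorted_filter; [exact: ltn_trans | exact: iota_ltn_sorted].
move=> v; rewrite !mem_filter !mem_iota andbC [in RHS]andbC.
have := PQ v; lia.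
Qed.

Section EdgeSums.
Local Open Scope ring_scope.
Variables (n : nat) (e : rel 'I_n).
Implicit Types F G : 'I_n -> 'I_n -> rat.

Lemma eq_edge_sum F G : (forall u v, F u v = G u v) -> edge_sum e F = edge_sum e G.
Proof. by move=> FG; apply: eq_bigr => u _; apply: eq_bigr => v _. Qed.

Lemma edge_sumD F G :
  edge_sum e (fun u v => F u v + G u v) = edge_sum e F + edge_sum e G.
Proof. by rewrite /edge_sum -big_split; apply: eq_bigr => u _; rewrite big_split. Qed.

Lemma edge_sumZ a F : edge_sum e (fun u v => a * F u v) = a * edge_sum e F.
Proof. by rewrite /edge_sum mulr_sumr; apply: eq_bigr => u _; rewrite mulr_sumr. Qed.

Lemma edge_sum_const a : edge_sum e (fun _ _ => a) = a * nedges e.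
Proof. by rewrite -edge_sumZ; apply: eq_edge_sum => u v; rewrite mulr1. Qed.

Lemma neutral_of_centered (c : rat) :
  nedges e != 0 ->
  edge_sum e (fun u v => ((deg e u)%:R - c) + ((deg e v)%:R - c)) = 0 ->
  edge_sum e (fun u v => ((deg e u)%:R - c) * ((deg e v)%:R - c)) = 0 ->
  edge_sum e (fun u v => ((deg e u)%:R - c) ^+ 2 + ((deg e v)%:R - c) ^+ 2) != 0 ->
  neutral e.
Proof.
move=> m0 sum_x sum_xx sum_x2; pose x u : rat := (deg e u)%:R - c.
have mean : mean_term e = c.
  rewrite /mean_term (@eq_edge_sum _ (fun u v => 2^-1 * (x u + x v) + c)); last first.
    by move=> u v; rewrite /x; field.
  by rewrite edge_sumD edge_sumZ sum_x edge_sum_const; field.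
have num : assort_num e = 0.
  rewrite /assort_num mean (@eq_edge_sum _
    (fun u v => x u * x v + (c * (x u + x v) + c ^+ 2))); last first.
    by move=> u v; rewrite /x; ring.
  by rewrite !edge_sumD edge_sumZ sum_x sum_xx edge_sum_const; field.
set S := edge_sum e (fun u v => x u ^+ 2 + x v ^+ 2).
have den : assort_den e = 2^-1 * (nedges e)^-1 * S.
  rewrite /assort_den mean (@eq_edge_sum _
    (fun u v => 2^-1 * (x u ^+ 2 + x v ^+ 2) + (c * (x u + x v) + c ^+ 2))); last first.
    by move=> u v; rewrite /x; field.
  rewrite edge_sumD edge_sumZ -/S edge_sumD edge_sumZ sum_x edge_sum_const.
  by field.
split=> //; split; last by rewrite /assortativity num mul0r.
by rewrite den !mulf_neq0 ?invr_eq0.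
Qed.

End EdgeSums.

Lemma connected_of_lower_neighbours n (e : rel 'I_n) : symmetric e ->
  (forall u : 'I_n, 0 < u -> exists2 v : 'I_n, v < u & e u v) ->
  connected_graph e.
Proof.
move=> e_sym down.
have to_root u (r : 'I_n) : val r = 0 -> connect e u r.
  move=> r0; elim: {u}_.+1 {-2}u (ltnSn u) => // k IH u uk.
  have [u0 | u_pos] := posnP u.
    by rewrite (_ : u = r) //; apply/val_inj; rewrite /= u0 r0.
  have [v vu euv] := down u u_pos.
  by apply: connect_trans (connect1 euv) (IH v _); lia.
move=> u v; pose r : 'I_n := Ordinal (leq_ltn_trans (leq0n u) (ltn_ord u)).
apply: connect_trans (to_root u r erefl) _.
by rewrite (sym_connect_sym e_sym) to_root.
Qed.

Definition head_adj (i j : nat) : bool :=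
  match i, j with
  | 0, (1 | 2 | 3 | 4 | 5) | 1, (2 | 4 | 5) | 2, (4 | 5) => true
  | _, _ => false
  end.

Definition path_square_adj (i j : nat) : bool :=
  [&& i != j, i <= j + 2 & j <= i + 2].

Definition witness_adj (i j : nat) : bool :=
  if (i < 6) && (j < 6) then head_adj i j || head_adj j i
  else path_square_adj i j.

Definition witness n : rel 'I_n := fun i j => witness_adj i j.
Arguments witness : clear implicits.

Lemma witness_adjC : symmetric witness_adj.
Proof.
move=> i j; rewrite /witness_adj /path_square_adj [(j < 6) && _]andbC orbC eq_sym.
by rewrite (andbC (j <= i + 2)).
Qed.

Lemma witness_adj_irr : irreflexive witness_adj.
Proof. by move=> i; rewrite /witness_adj /path_square_adj eqxx; case: i => [|[|[|[|[|[|]]]]]]. Qed.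

Lemma witness_simple n : simple_graph (witness n).
Proof. by split=> [i j | i]; [exact: witness_adjC | exact: witness_adj_irr]. Qed.

Lemma witness_adj_tail i j : (6 <= i) -> witness_adj i j = path_square_adj i j.
Proof. by move=> i6; rewrite /witness_adj ifF //; apply/negbTE; lia. Qed.

Lemma witness_adj_lower u : (0 < u) -> witness_adj u (if u < 6 then 0 else u.-1).
Proof.
case: ifP => [|u6] u0; first by case: u u0 => [|[|[|[|[|[|]]]]]].
rewrite witness_adj_tail /path_square_adj; lia.
Qed.

Lemma connected_witness n : connected_graph (witness n).
Proof.
apply: connected_of_lower_neighbours => [i j|u u0]; first exact: witness_adjC.
have lt_n : ((if u < 6 then 0 else u.-1) < n).
  by apply: leq_ltn_trans (ltn_ord u); case: ifP => _; lia.
exists (Ordinal lt_n); first by rewrite /=; case: ifP => _; lia.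
exact: witness_adj_lower.
Qed.

Lemma witness_has_triangle n : (3 <= n) -> has_cycle (witness n).
Proof.
move=> n3.
by exists [:: Ordinal (ltnW (ltnW n3)); Ordinal (ltnW n3); Ordinal n3].
Qed.

Local Open Scope ring_scope.

Lemma witness_forward_sum_head n u (F : nat -> rat) : (u < 6)%N -> (8 <= n)%N ->
  \sum_(0 <= v < n | (u < v)%N && witness_adj u v) F v =
  \sum_(0 <= v < 8 | (u < v)%N && witness_adj u v) F v.
Proof.
move=> u6 n8; apply: big_nat_range => v.
case: (ltnP v 8) => v8; first by rewrite (leq_trans v8 n8).
by rewrite /witness_adj ifF /path_square_adj ?andbF //; apply/negbTE; lia.
Qed.

Lemma witness_forward_sum_tail n u (F : nat -> rat) : (6 <= u)%N ->
  \sum_(0 <= v < n | (u < v)%N && witness_adj u v) F v =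
  (if (u.+1 < n)%N then F u.+1 else 0) + (if (u.+2 < n)%N then F u.+2 else 0).
Proof.
move=> u6; rewrite (@big_nat_range _ _ _ _ _ u.+1 u.+3 _ (fun v => v < n)%N) => [|v].
  by rewrite big_mkcond big_ltn // big_ltn // big_geq //= addr0.
by rewrite witness_adj_tail // /path_square_adj; lia.
Qed.

Lemma sum_nat_truncate m n k (F : nat -> rat) :
  \sum_(m <= u < n) (if (u + k < n)%N then F u else 0) = \sum_(m <= u < n - k) F u.
Proof. by rewrite -big_mkcond; apply: big_nat_range => u; rewrite andbT; lia. Qed.

Lemma witness_head_edge_sum n (G : nat -> nat -> rat) : (8 <= n)%N ->
  \sum_(0 <= u < 6) \sum_(0 <= v < n | (u < v)%N && witness_adj u v) G u v =
    G 0 1 + G 0 2 + G 0 3 + G 0 4 + G 0 5 + G 1 2 + G 1 4 + G 1 5 + G 2 4 + G 2 5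
    + G 4 6 + G 5 6 + G 5 7.
Proof.
move=> n8; rewrite (eq_big_nat _ _
  (F2 := fun u => \sum_(0 <= v < 8 | (u < v)%N && witness_adj u v) G u v)).
  by rewrite unlock /=; ring.
by move=> u /andP[_ u6]; apply: witness_forward_sum_head.
Qed.

Lemma witness_tail_edge_sum n (G : nat -> nat -> rat) :
  \sum_(6 <= u < n) \sum_(0 <= v < n | (u < v)%N && witness_adj u v) G u v =
    \sum_(6 <= u < n - 1) G u u.+1 + \sum_(6 <= u < n - 2) G u u.+2.
Proof.
rewrite (eq_big_nat _ _ (F2 := fun u =>
  (if (u + 1 < n)%N then G u u.+1 else 0) + (if (u + 2 < n)%N then G u u.+2 else 0))).
  by rewrite big_split !sum_nat_truncate.
by move=> u /andP[u6 _]; rewrite witness_forward_sum_tail // addn1 addn2.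
Qed.

Lemma witness_edge_sum n (G : nat -> nat -> rat) : (8 <= n)%N ->
  edge_sum (witness n) (fun u v => G u v) =
    G 0 1 + G 0 2 + G 0 3 + G 0 4 + G 0 5 + G 1 2 + G 1 4 + G 1 5 + G 2 4 + G 2 5
    + G 4 6 + G 5 6 + G 5 7
    + \sum_(6 <= u < n - 1) G u u.+1 + \sum_(6 <= u < n - 2) G u u.+2.
Proof.
move=> n8; have -> : edge_sum (witness n) (fun u v => G u v) =
    \sum_(0 <= u < n) \sum_(0 <= v < n | (u < v)%N && witness_adj u v) G u v.
  by rewrite big_mkord; apply: eq_bigr => u _; rewrite big_mkord.
rewrite (@big_cat_nat _ _ _ 6) //=; last lia.
by rewrite witness_head_edge_sum // witness_tail_edge_sum addrA.
Qed.

Lemma deg_witness n (u : 'I_n) :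
  deg (witness n) u = count (witness_adj u) (iota 0 n).
Proof. by rewrite /deg cardsE -val_enum_ord count_map -size_filter cardE enumT. Qed.

Lemma count_path_square u n : (2 <= u)%N ->
  count (path_square_adj u) (iota 0 n) = (minn n u - (u - 2) + minn (n - u.+1) 2)%N.
Proof.
move=> u2; elim: n => [|n IH]; first by rewrite /= !min0n.
rewrite -addn1 iotaD count_cat IH /= addn0 /path_square_adj.
by case: eqP => ?; case: leqP => ?; case: leqP => ? /=; lia.
Qed.

Lemma count_witness_tail n u : (6 <= u < n)%N ->
  count (witness_adj u) (iota 0 n) = (2 + minn (n - u.+1) 2)%N.
Proof.
case/andP=> u6 un; rewrite (eq_count (a2 := path_square_adj u)) => [|v].
  by rewrite count_path_square; lia.
exact: witness_adj_tail.
Qed.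

Lemma count_witness_head n u : (u < 6)%N -> (8 <= n)%N ->
  count (witness_adj u) (iota 0 n) = nth 0%N [:: 5; 4; 4; 1; 4; 5]%N u.
Proof.
move=> u6 n8; rewrite -(subnKC n8) iotaD count_cat.
rewrite (@eq_in_count _ _ pred0 (iota (0 + 8) _)) ?count_pred0 ?addn0 => [|v].
  by case: u u6 => [|[|[|[|[|[|]]]]]].
rewrite mem_iota /witness_adj /path_square_adj => /andP[v8 _].
by rewrite ifF; apply/negbTE; lia.
Qed.

Lemma witness_degree_edge_sum n (g : rat -> rat -> rat) : (10 <= n)%N ->
  edge_sum (witness n)
    (fun u v => g (deg (witness n) u)%:R (deg (witness n) v)%:R) =
    g 5 4 + g 5 4 + g 5 1 + g 5 4 + g 5 5 + g 4 4 + g 4 4 + g 4 5 + g 4 4 + g 4 5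
    + g 4 4 + g 5 4 + g 5 4
    + (g 4 4 *+ (n - 9) + g 4 3 + g 3 2)
    + (g 4 4 *+ (n - 10) + g 4 3 + g 4 2).
Proof.
move=> n10; pose d u : rat := (count (witness_adj u) (iota 0 n))%:R.
have d_head u : (u < 6)%N -> d u = (nth 0 [:: 5; 4; 4; 1; 4; 5] u)%:R.
  by move=> u6; rewrite /d count_witness_head //; lia.
have d_bulk u : (6 <= u)%N -> (u.+2 < n)%N -> d u = 4.
  by move=> u6 un; rewrite /d count_witness_tail ?(minn_idPr _) //; lia.
have d_last2 : d (n - 2)%N = 3.
  by rewrite /d count_witness_tail; [congr _%:R |]; lia.
have d_last : d (n - 1)%N = 2.
  by rewrite /d count_witness_tail; [congr _%:R |]; lia.
have bulk1 : \sum_(6 <= i < n - 3) g (d i) (d i.+1) = g 4 4 *+ (n - 9).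
  rewrite (eq_big_nat _ _ (F2 := fun=> g 4 4)) => [|i /andP[i6 i_lt]].
    by rewrite sumr_const_nat; congr (_ *+ _); lia.
  by rewrite !d_bulk //; lia.
have bulk2 : \sum_(6 <= i < n - 4) g (d i) (d i.+2) = g 4 4 *+ (n - 10).
  rewrite (eq_big_nat _ _ (F2 := fun=> g 4 4)) => [|i /andP[i6 i_lt]].
    by rewrite sumr_const_nat; congr (_ *+ _); lia.
  by rewrite !d_bulk //; lia.
rewrite (@eq_edge_sum _ _ _ (fun u v => g (d u) (d v))) => [|u v]; last first.
  by rewrite !deg_witness.
rewrite (witness_edge_sum (fun a b => g (d a) (d b))); last lia.
rewrite (d_head 0) // (d_head 1) // (d_head 2) // (d_head 3) // (d_head 4) //.
rewrite (d_head 5) // (d_bulk 6) ?(d_bulk 7) //=; try lia.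
rewrite (_ : n - 1 = (n - 3).+2)%N; last lia.
rewrite (_ : n - 2 = (n - 4).+2)%N; last lia.
rewrite !big_nat_recr /= ?bulk1 ?bulk2; try lia.
have e4 : (n - 4).+1 = (n - 3)%N by lia.
have e3 : (n - 3).+1 = (n - 2)%N by lia.
have e2 : (n - 2).+1 = (n - 1)%N by lia.
by rewrite e4 e3 e2 d_last2 d_last (d_bulk (n - 3)%N) ?(d_bulk (n - 4)%N); try lia.
Qed.

Lemma neutral_witness n : (10 <= n)%N -> neutral (witness n).
Proof.
move=> n10; apply: (@neutral_of_centered _ _ 4).
- rewrite /nedges (witness_degree_edge_sum (fun _ _ => 1)) //.
  apply/eqP; have := ler0n rat (n - 9); have := ler0n rat (n - 10); lra.
- by rewrite (witness_degree_edge_sum (fun a b => (a - 4) + (b - 4))) //; ring.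
- by rewrite (witness_degree_edge_sum (fun a b => (a - 4) * (b - 4))) //; ring.
- rewrite (witness_degree_edge_sum (fun a b => (a - 4) ^+ 2 + (b - 4) ^+ 2)) //.
  set S := (X in X != 0); suff -> : S = 30 by [].
  by rewrite /S; ring.
Qed.

Theorem theorem3 (n : nat) (hn : (38 <= n)%N) :
  exists e : rel 'I_n,
    [/\ simple_graph e, connected_graph e, neutral e & ~ is_tree e].
Proof.
exists (witness n); split.
- exact: witness_simple.
- exact: connected_witness.
- by apply: neutral_witness; lia.
- by case=> _; apply; apply: witness_has_triangle; lia.
Qed.
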